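(* Let $\beta,\varepsilon\in(0,1)$, let $(V,A,\succ)$ be an election with $n$ voters, and let $(x,y,p)$ be a LEO with total budget $B=1$ and income distribution a threshold distribution $\mathcal{I}^{\beta,\varepsilon}$. Let $C\subseteq A$. Then for every $a\in A\setminus C$, $$\big|\{v\in V: a\succ_v C\}\big|\le \frac{\beta n}{1-\varepsilon}+\big|\{v\in V: v \text{ is uncovered by } C\}\big|.$$
   Context: An election $(V,A,\succ)$: finite nonempty voter set $V$ with $n=|V|$, finite candidate set $A$, strict linear order $\succ_v$ on $A$ per voter; $a\succ_v C$ means $a\succ_v c$ for all $c\in C$. Extend $\succ_v$ to $A\cup\{\emptyset\}$ with $\emptyset$ strictly below all candidates; $a\succeq_v b$ means $a=b$ or $a\succ_v b$. Given prices $p_v\in[0,1]^{A\cup\{\emptyset\}}$ with $p_{v,\emptyset}=0$ and income $b\ge0$, voter $v$'s demand is the $\succ_v$-maximal element of $\{a\in A\cup\{\emptyset\}: p_{v,a}\le b\}$; the random demand $\mathcal{D}_v(p_v,\mathcal{I})$ is this demand with $b\sim\mathcal{I}$. A LEO $(x,y,p)$ with income $\mathcal{I}$ and budget $B>0$: prices $p_v\in[0,1]^{A\cup\{\emptyset\}}$ with $p_{v,\emptyset}=0$, consumptions $x_v\in[0,1]^{A\cup\{\emptyset\}}$, and $y\in[0,B]^A$, with (1) $x_{v,a}=\Pr[\mathcal{D}_v(p_v,\mathcal{I})=a]$; (2) $x_{v,a}\le y_a$ for $a\in A$, and $p_{v,a}=0$ whenever $x_{v,a}<y_a$; (3) $y$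 maximizes $\sum_{a}(\sum_v p_{v,a})z_a$ over $z\in\mathbb{R}^A_{\ge0}$ with $\sum_a z_a=B$. A threshold distribution $\mathcal{I}^{\beta,\varepsilon}$ is a distribution of a random variable $X$ supported on $[0,1]$ with continuous CDF, $\Pr[X\ge1-\varepsilon]=\beta$, and $\mathbb{E}[X]\le\beta$. Given the LEO, the boundary candidate of $v$ is $a_v=$ the $\succ_v$-maximal element of $\{a\in A\cup\{\emptyset\}: p_{v,a}\le1-\varepsilon\}$. Voter $v$ is covered by $C$ if some $c\in C$ satisfies $c\succeq_v a_v$, and uncovered otherwise. *)

From HB Require Import structures.
From mathcomp Require Import all_boot all_order all_algebra.
From mathcomp Require Import all_classical all_reals all_analysis.
Set Implicit Arguments. Unset Strict Implicit. Unset Printing Implicit Defensive.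
Import Order.TTheory GRing.Theory Num.Theory.
Local Open Scope ring_scope.
Local Open Scope classical_set_scope.

Definition strict_linear_order (A : finType) (pr : rel A) : Prop :=
  irreflexive pr /\ transitive pr /\ (forall a b, a != b -> pr a b || pr b a).

(* Extension of a preference to A ∪ {∅}, with ∅ = None strictly below all
   candidates. *)
Definition prefo (A : finType) (pr : rel A) (x y : option A) : bool :=
  match x, y with
  | Some a, Some b => pr a b
  | Some _, None => true
  | None, _ => false
  end.

Definition prefeqo (A : finType) (pr : rel A) (x y : option A) : bool :=
  (x == y) || prefo pr x y.

Definition is_max (A : finType) (pr : rel A) (S : pred (option A)) (d : option A) : bool :=
  S d && [forall o, (S o && (o != d)) ==> prefo pr d o].

Definition is_demand (R : realType) (A : finType) (pr : rel A)
  (pv : option A -> R) (b : R) (d : option A) : bool :=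
  is_max pr (fun o => pv o <= b) d.

(* Threshold distribution I^{beta,eps}: law P of a random variable X supported
   on [0,1], with continuous CDF (no atoms), Pr[X >= 1-eps] = beta, E[X] <= beta. *)
Definition threshold_distribution (R : realType) (P : probability R R) (beta eps : R) : Prop :=
  P [set` `[0%R, 1%R]] = 1%E /\
  (forall t : R, P [set t] = 0%E) /\
  P [set` `[(1 - eps)%R, +oo[] = beta%:E /\
  (\int[P]_x (x%:E) <= beta%:E)%E.

Definition LEO (R : realType) (V A : finType) (pref : V -> rel A)
  (P : probability R R) (B : R)
  (x : V -> option A -> R) (y : A -> R) (p : V -> option A -> R) : Prop :=
  (forall v o, 0 <= p v o <= 1) /\ (forall v, p v None = 0) /\
  (forall v o, 0 <= x v o <= 1) /\ (forall a, 0 <= y a <= B) /\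
  (forall v o, (x v o)%:E = P [set b | is_demand (pref v) (p v) b o]) /\
  (forall v a, x v (Some a) <= y a) /\
  (forall v a, x v (Some a) < y a -> p v (Some a) = 0) /\
  (\sum_a y a = B) /\
  (forall z : A -> R, (forall a, 0 <= z a) -> \sum_a z a = B ->
     \sum_a (\sum_v p v (Some a)) * z a <= \sum_a (\sum_v p v (Some a)) * y a).

Definition is_boundary (R : realType) (A : finType) (pr : rel A)
  (pv : option A -> R) (eps : R) (o : option A) : bool :=
  is_max pr (fun o' => pv o' <= 1 - eps) o.

Definition covered (R : realType) (A : finType) (pr : rel A)
  (pv : option A -> R) (eps : R) (C : {set A}) : bool :=
  [exists o, is_boundary pr pv eps o &&
     [exists c in C, prefeqo pr (Some c) o]].

From HB Require Import structures.
From mathcomp Require Import all_boot all_order all_algebra.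
From mathcomp Require Import all_classical all_reals all_analysis.
From mathcomp Require Import measurable_realfun.
Set Implicit Arguments. Unset Strict Implicit. Unset Printing Implicit Defensive.
Import Order.TTheory GRing.Theory Num.Theory.
Local Open Scope ring_scope.

(* A voter who is covered by C but ranks a above all of C must face a price
   above 1 - eps for a: otherwise a would be affordable at income 1 - eps and
   beat the boundary candidate. Each such voter therefore contributes more
   than 1 - eps to the total price pi_a of a. On the other hand, since the
   budget is 1, optimality of y gives pi_a <= sum_a pi_a y_a, and by
   complementary slackness this is the total spending of the voters. A voter
   never spends more than her income, so her expected spending is at most
   E[X] <= beta, and summing over voters pi_a <= beta n. *)

Section StrictPreference.
Variables (A : finType) (pr : rel A).
Hypothesis pr_slo : strict_linear_order pr.

Lemma prefo_irr : irreflexive (prefo pr).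
Proof. by case: pr_slo => irr _ [a|] //=; rewrite irr. Qed.

Lemma prefo_trans : transitive (prefo pr).
Proof. by case: pr_slo => _ [tr _] [b|] [a|] [c|] //=; exact: tr. Qed.
Arguments prefo_trans {y x z}.

Lemma prefo_prefeqo_trans x y z : prefo pr x y -> prefeqo pr y z -> prefo pr x z.
Proof. by move=> xy /orP[/eqP <- //|]; exact: prefo_trans. Qed.

Lemma is_max_uniq (S : pred (option A)) d1 d2 :
  is_max pr S d1 -> is_max pr S d2 -> d1 = d2.
Proof.
move=> /andP[S1 /forallP max1] /andP[S2 /forallP max2].
apply/eqP/negPn/negP => ne.
have := max1 d2; rewrite S2 eq_sym ne => /prefo_trans d12.
by have := max2 d1; rewrite S1 ne => /d12; rewrite prefo_irr.
Qed.

Lemma is_max_above (S : pred (option A)) d e :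
  is_max pr S d -> prefo pr e d -> ~~ S e.
Proof.
move=> /andP[_ /forallP maxd] ed; apply/negP => Se.
have ne : e != d by apply: contraTneq ed => ->; rewrite prefo_irr.
by have := maxd e; rewrite Se ne => /(prefo_trans ed); rewrite prefo_irr.
Qed.

Lemma covered_price_gt (R : realType) (pv : option A -> R) eps (C : {set A}) a :
  [forall c in C, pr a c] -> covered pr pv eps C -> 1 - eps < pv (Some a).
Proof.
move=> /forall_inP aC /existsP[b /andP[bb /exists_inP[c cC cb]]].
rewrite ltNge; apply: (@is_max_above _ b (Some a) bb).
by apply: (@prefo_prefeqo_trans _ (Some c)) cb; exact: aC.
Qed.

End StrictPreference.

Section Measurability.
Local Open Scope classical_set_scope.

Lemma measurable_fun_forallb (d : measure_display) (T : measurableType d)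
    (I : finType) (F : I -> T -> bool) :
  (forall i, measurable_fun setT (F i)) ->
  measurable_fun setT (fun t => [forall i, F i t]).
Proof.
move=> mF.
have -> : (fun t => [forall i, F i t]) = (fun t => \big[andb/true]_i F i t).
  by apply/funext => t; rewrite big_andE; apply: eq_forallb.
elim: (index_enum I) => [|i s IHs].
  by under eq_fun do rewrite big_nil; exact: measurable_cst.
by under eq_fun do rewrite big_cons; exact: measurable_and.
Qed.

Lemma measurable_demand (R : realType) (A : finType) (pr : rel A)
    (pv : option A -> R) o :
  measurable [set b : R | is_demand pr pv b o].
Proof.
have mdem : measurable_fun setT (fun b : R => is_demand pr pv b o).
  apply: measurable_and; first exact: measurable_fun_ler.
  apply: measurable_fun_forallb => o'; under eq_fun do rewrite implybE.
  apply: measurable_or => //; apply/measurable_neg/measurable_and => //.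
  exact: measurable_fun_ler.
by have := mdem measurableT [set true] I; rewrite setTI preimage_true.
Qed.

End Measurability.

Section ExpectedSpending.
Local Open Scope classical_set_scope.
Variable R : realType.

Lemma probability_itv01_neg0 (P : probability R R) :
  P `[0, 1] = 1%E -> P `]-oo, 0[ = 0%E.
Proof.
move=> P01; apply/eqP; rewrite eq_le measure_ge0 andbT.
have <- : P (~` `[0, 1]) = 0%E.
  by rewrite probability_setC ?P01 ?subee //; exact: measurable_itv.
apply: le_measure; rewrite ?inE.
- exact: measurable_itv.
- by apply: measurableC; exact: measurable_itv.
by move=> t /=; rewrite !in_itv /= => t0 /andP[/(lt_le_trans t0)]; rewrite ltxx.
Qed.

Lemma integral_maxr0 (mu : measure R R) :
  mu `]-oo, 0[ = 0%E -> (\int[mu]_t (Num.max t 0)%:E = \int[mu]_t t%:E)%E.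
Proof.
move=> mu_neg; apply: ae_eq_integral => //.
  by apply/measurable_EFinP; exact: measurable_maxr.
exists `]-oo, 0[; split => //.
move=> t /= nt; apply: contrapT => t_neg; apply: nt => _.
congr EFin; apply/max_idPl; rewrite leNgt.
by apply: contra_notN t_neg => t0; rewrite in_itv.
Qed.

Lemma demand_spending_le (A : finType) (pr : rel A) (pv : option A -> R) b :
  strict_linear_order pr ->
  \sum_o pv o * \1_[set b | is_demand pr pv b o] b <= Num.max b 0.
Proof.
move=> pr_slo; case: (pickP (is_demand pr pv b)) => [d dd | nodem].
  rewrite (bigD1 d) //= big1 => [|o od].
    by rewrite indicE mem_set // mulr1 addr0 le_max; case/andP: dd => ->.
  rewrite indicE memNset ?mulr0 //= => do'.
  by move: od; rewrite (is_max_uniq pr_slo do' dd) eqxx.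
rewrite big1 ?le_max ?lexx ?orbT // => o _.
by rewrite indicE memNset ?mulr0 //= nodem.
Qed.

Lemma expected_spending_le (A : finType) (pr : rel A) (P : probability R R)
    (beta : R) (pv xv : option A -> R) :
  strict_linear_order pr -> (forall o, 0 <= pv o) ->
  P `]-oo, 0[ = 0%E -> (\int[P]_t t%:E <= beta%:E)%E ->
  (forall o, (xv o)%:E = P [set b | is_demand pr pv b o]) ->
  \sum_o pv o * xv o <= beta.
Proof.
move=> pr_slo pv0 P_neg Pmean xvE.
pose D o := [set b : R | is_demand pr pv b o].
pose f o t := (pv o * \1_(D o) t)%:E.
have mf o : measurable_fun setT (f o).
  apply/measurable_EFinP/measurable_funM => //.
  by apply: measurable_indic; exact: measurable_demand.
have f0 o t : setT t -> (0 <= f o t)%E by rewrite lee_fin mulr_ge0 // indicE.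
have xvE' o : ((pv o * xv o)%:E = \int[P]_t f o t)%E.
  rewrite /f (@integralZl_indic _ _ _ _ _ measurableT (fun _ => D o)) //.
  - by rewrite integral_indic ?setIT ?EFinM ?xvE //; exact: measurable_demand.
  - by move=> /lt_le_trans /(_ (pv0 o)); rewrite ltxx.
  - exact: measurable_demand.
rewrite -lee_fin -sumEFin (eq_bigr _ (fun o _ => xvE' o)) -ge0_integral_sum //.
rewrite (le_trans _ Pmean) // -integral_maxr0 //.
apply: ge0_le_integral => //.
- by move=> t _; apply: sume_ge0 => o _; exact: f0.
- exact: emeasurable_sum.
- by apply/measurable_EFinP; exact: measurable_maxr.
- by move=> b _; rewrite sumEFin lee_fin; exact: demand_spending_le.
Qed.

End ExpectedSpending.

Section Market.
Variables (R : realType) (V A : finType).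

Lemma sumr_option (F : option A -> R) :
  F None = 0 -> \sum_o F o = \sum_a F (Some a).
Proof.
move=> F0; rewrite (bigD1 None) //= F0 add0r.
rewrite (@reindex_omap _ _ _ _ _ Some id) //=; last by case.
by apply: eq_bigl => a; rewrite eqxx.
Qed.

Lemma price_le_revenue (pi y : A -> R) a :
  (forall z : A -> R, (forall a, 0 <= z a) -> \sum_a z a = 1 ->
     \sum_a pi a * z a <= \sum_a pi a * y a) ->
  pi a <= \sum_a pi a * y a.
Proof.
move=> yopt; have := yopt (fun a' => (a' == a)%:R).
rewrite (bigD1 a) //= eqxx big1 => [|a' /negbTE -> //].
rewrite (bigD1 a) //= eqxx mulr1 big1 => [|a' /negbTE ->]; last by rewrite mulr0.
by rewrite !addr0; apply=> // a'; rewrite ler0n.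
Qed.

Lemma revenue_eq_spending (p x : V -> A -> R) (y : A -> R) :
  (forall v a, x v a <= y a) -> (forall v a, x v a < y a -> p v a = 0) ->
  \sum_a (\sum_v p v a) * y a = \sum_v \sum_a p v a * x v a.
Proof.
move=> xy slack; rewrite exchange_big /=; apply: eq_bigr => a _.
rewrite mulr_suml; apply: eq_bigr => v _.
by have := xy v a; rewrite le_eqVlt => /orP[/eqP -> //|/slack ->]; rewrite !mul0r.
Qed.

Lemma scaled_card_le_sum (T : {set V}) (f : V -> R) c :
  (forall v, 0 <= f v) -> (forall v, v \in T -> c <= f v) ->
  c * #|T|%:R <= \sum_v f v.
Proof.
move=> f0 cf; rewrite -sum1_card natr_sum mulr_sumr [leRHS](bigID (mem T)) /=.
apply: ler_wpDr; first exact: sumr_ge0.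
by apply: ler_sum => v vT; rewrite mulr1 cf.
Qed.

End Market.

Theorem mainTheorem8 (R : realType) (V A : finType) (pref : V -> rel A)
  (beta eps : R) (P : probability R R)
  (x : V -> option A -> R) (y : A -> R) (p : V -> option A -> R)
  (C : {set A}) (a : A) :
  0 < beta < 1 -> 0 < eps < 1 ->
  (0 < #|V|)%N ->
  (forall v, strict_linear_order (pref v)) ->
  threshold_distribution P beta eps ->
  LEO pref P 1 x y p ->
  a \notin C ->
  (#|[set v | [forall c in C, pref v a c]]|%:R : R)
    <= beta * #|V|%:R / (1 - eps)
       + #|[set v | ~~ covered (pref v) (p v) eps C]|%:R.
Proof.
move=> _ /andP[_ eps_lt1] _ pref_slo [P01 [_ [_ Pmean]]]
  [p01 [pN [_ [_ [xE [xy [slack [_ yopt]]]]]]]] _.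
set S := [set v | _]; set U := [set v | _].
pose T := [set v in S | covered (pref v) (p v) eps C].
have p0 v o : 0 <= p v o by case/andP: (p01 v o).
have spending v : \sum_a' p v (Some a') * x v (Some a') <= beta.
  rewrite -(sumr_option (F := fun o => p v o * x v o)) ?pN ?mul0r //.
  apply: expected_spending_le (pref_slo v) (p0 v) _ Pmean (xE v).
  by apply: probability_itv01_neg0; rewrite -P01 set_mem_set.
have price_a : \sum_v p v (Some a) <= beta * #|V|%:R.
  apply: le_trans (price_le_revenue a yopt) _.
  rewrite (revenue_eq_spending (p := fun v a => p v (Some a)) xy slack).
  apply: le_trans (ler_sum _ (fun v _ => spending v)) _.
  by rewrite sumr_const mulr_natr.
have T_price : (1 - eps) * #|T|%:R <= \sum_v p v (Some a).
  apply: scaled_card_le_sum => // v; rewrite !inE => /andP[vS vC].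
  exact/ltW/(covered_price_gt (pref_slo v) vS vC).
have card_S : (#|S| <= #|T| + #|U|)%N.
  apply/(leq_trans _ (leq_card_setU T U))/subset_leq_card/fintype.subsetP.
  by move=> v; rewrite !inE => ->; case: covered.
apply: le_trans (_ : #|T|%:R + #|U|%:R <= _); first by rewrite -natrD ler_nat.
rewrite lerD2r ler_pdivlMr ?subr_gt0 // mulrC.
exact: le_trans T_price price_a.
Qed.
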